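(* Let $G_0$ be a finite group with an involutive automorphism $g\mapsto\tilde g$. On $\mathcal H=\mathbb C^{G_0}$ with orthonormal basis $\{|g\rangle\}_{g\in G_0}$ let $D(g)=\sum_{h}|gh\rangle\langle h|$ for $g\in G_0$, and let $D(t)=\sum_g|\tilde g\rangle\langle g|K$ be antiunitary ($K$ = complex conjugation in this basis); set $D(gt)=D(g)D(t)$. Define on $\mathcal H\otimes\mathcal H$ $$U_1=\sum_{g\in G_0}D(g)\otimes|g^{-1}\rangle\langle g^{-1}|,\quad u_2=\sum_{g\in G_0}\tfrac1{\sqrt2}\big(e^{i\pi/4}|g\rangle+e^{-i\pi/4}|\tilde g\rangle\big)\langle g|,\quad u=(u_2\otimes\mathbb{1})U_1 .$$ Then $u$ is unitary and $u\,(D(g)\otimes D(g))\,u^\dagger=\mathbb{1}\otimes D(g)$ for every $g\in G_0\rtimes\mathbb Z_2^{\mathcal T}$ (i.e. for $g\in G_0$ and for $g=g_0t$, $g_0\in G_0$). Consequently, by iterating, $D(g)^{\otimes N}$ is unitarily equivalent (by a unitary independent of $g$) to $\mathbb{1}_{|G_0|^{N-1}}\otimes D(g)$ for all $g$. *)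

From mathcomp Require Import all_boot all_algebra all_fingroup all_field.
Set Implicit Arguments. Unset Strict Implicit. Unset Printing Implicit Defensive.
Import GRing.Theory Num.Theory.
Local Open Scope ring_scope.

(* Operators on C^I (I a finite basis index) as matrices indexed by I:
   [A x y] is the coefficient <x| A |y>. *)
Definition op (I : finType) := I -> I -> algC.

Definition op1 (I : finType) : op I := fun x y => (x == y)%:R.
Definition opmul (I : finType) (A B : op I) : op I :=
  fun x y => \sum_(z : I) A x z * B z y.
Definition opadj (I : finType) (A : op I) : op I := fun x y => (A y x)^*.
Definition opconj (I : finType) (A : op I) : op I := fun x y => (A x y)^*.
Definition opkron (I J : finType) (A : op I) (B : op J) : op (I * J)%type :=
  fun x y => A x.1 y.1 * B x.2 y.2.
Definition opsum (I : finType) (T : finType) (F : T -> op I) : op I :=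
  fun x y => \sum_(t : T) F t x y.
Definition ketbra (I : finType) (a b : I) : op I :=
  fun x y => ((x == a) && (y == b))%:R.

Definition unitary (I : finType) (A : op I) : Prop :=
  opmul A (opadj A) = @op1 I /\ opmul (opadj A) A = @op1 I.

(* Linear-or-antilinear operators: (A, false) is the linear operator A,
   (A, true) is the antilinear operator A K, K = complex conjugation in the
   computational (product) basis. *)
Definition aop (I : finType) := (op I * bool)%type.
Definition lin (I : finType) (A : op I) : aop I := (A, false).
(* composition: (A K^b)(B K^c) = A conj^b(B) K^(b xor c) *)
Definition acomp (I : finType) (X Y : aop I) : aop I :=
  (opmul X.1 (if X.2 then opconj Y.1 else Y.1), X.2 (+) Y.2).
(* tensor product, with K acting on the whole tensor product in the product
   basis (physics convention; only used when the linear factors are real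
   or both factors have the same antiunitarity) *)
Definition akron (I J : finType) (X : aop I) (Y : aop J) : aop (I * J)%type :=
  (opkron X.1 Y.1, X.2 || Y.2).

Section Rep.
Variable gT : finGroupType.
Variable tl : gT -> gT.

Definition Dmat (g : gT) : op gT := fun a b => (a == g * b)%g%:R.
Definition Dtmat : op gT := fun a b => (a == tl b)%:R.
Definition Dt : aop gT := (Dtmat, true).
(* elements of G0 x| Z2^T written (g0, b) for g0 t^b; D(g0 t) = D(g0) D(t) *)
Definition D (x : gT * bool) : aop gT :=
  if x.2 then acomp (lin (Dmat x.1)) Dt else lin (Dmat x.1).

Definition U1 : op (gT * gT)%type :=
  opsum (fun g : gT => opkron (Dmat g) (ketbra g^-1 g^-1)%g).
Definition expi4 : algC := (1 + 'i) / sqrtC 2.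
Definition u2 : op gT :=
  opsum (fun g : gT => fun a b =>
    (sqrtC 2)^-1 * (expi4 * ketbra g g a b + expi4^* * ketbra (tl g) g a b)).
Definition u : op (gT * gT)%type := opmul (opkron u2 (@op1 gT)) U1.

Definition tpow (N : nat) (X : aop gT) : aop {ffun 'I_N -> gT} :=
  (fun x y : {ffun 'I_N -> gT} => \prod_(i < N) X.1 (x i) (y i), X.2).
Definition id_tens_last (n : nat) (X : aop gT) : aop {ffun 'I_n.+1 -> gT} :=
  (fun x y : {ffun 'I_n.+1 -> gT} => (\prod_(i < n) ((x (widen_ord (leqnSn n) i)) ==
                               (y (widen_ord (leqnSn n) i)))%:R)
              * X.1 (x ord_max) (y ord_max), X.2).
End Rep.

From mathcomp Require Import all_boot all_algebra all_fingroup all_field.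
From mathcomp Require Import ring.
From Stdlib Require Import FunctionalExtensionality.
Set Implicit Arguments. Unset Strict Implicit. Unset Printing Implicit Defensive.
Import GRing.Theory Num.Theory.
Local Open Scope ring_scope.

(* Every operator in sight is a local unitary times a permutation of the basis:
   D(g0 t^b) is the permutation y |-> g0 ~y^b followed by K^b, and U1 is the
   permutation (a, c) |-> (c^-1 a, c).  Conjugating a permutation operator by a
   permutation operator conjugates the permutation, and, writing ~^b for the
   b-th power of ~, (g0 ~^b c)^-1 g0 ~^b (c a) = ~^b a, so U1 (D(g) (x) D(g)) U1^-1 acts as D(g) on the
   second factor and only as 1 (b = 0) or as D(t) (b = 1) on the first one.
   The phase e^{i pi/4} makes the matrix of u2 unitary, symmetric and such that
   <a|u2|~c> = conj <a|u2|c>, hence u2 D(t) u2^-1 = K, which removes the first factor.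
   For N copies the same permutation trick divides every other coordinate on
   the left by the last one. *)

Section Operators.
Variable I : finType.
Implicit Types (A B V : op I) (f : I -> I).

Lemma opext A B : (forall x y, A x y = B x y) -> A = B.
Proof.
move=> eqAB; apply: functional_extensionality => x.
by apply: functional_extensionality => y; exact: eqAB.
Qed.

Definition permop f : op I := fun x y => (x == f y)%:R.

(* The adjoint twisted by K^b: conjugating [A K^b] by [V] yields
   [V A K^b V^-1 = V A (opadjb b V) K^b]. *)
Definition opadjb (b : bool) A : op I :=
  if b then opconj (opadj A) else opadj A.

Lemma sum_delta (e : I) (F : I -> algC) : \sum_z ((z == e)%:R * F z) = F e.
Proof.
rewrite (bigD1 e) //= eqxx mul1r big1 ?addr0 // => z /negPf ->.
by rewrite mul0r.
Qed.

Lemma opmul_permop A f : opmul A (permop f) = fun x y => A x (f y).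
Proof.
apply: opext => x y; rewrite /opmul /permop -[RHS](sum_delta (f y) (A x)).
by apply: eq_bigr => z _; rewrite mulrC.
Qed.

Lemma mul1op A : opmul (@op1 I) A = A.
Proof.
apply: opext => x y; rewrite /opmul /op1 -[RHS](sum_delta x (A^~ y)).
by apply: eq_bigr => z _; rewrite eq_sym.
Qed.

Lemma mulop1 A : opmul A (@op1 I) = A.
Proof. by have := opmul_permop A id. Qed.

Lemma opconj_mul A B : opconj (opmul A B) = opmul (opconj A) (opconj B).
Proof.
apply: opext => x y; rewrite /opconj /opmul rmorph_sum /=.
by apply: eq_bigr => z _; rewrite rmorphM.
Qed.

Lemma opconjK : involutive (@opconj I).
Proof. by move=> A; apply: opext => x y; rewrite /opconj conjCK. Qed.

Lemma opconj_op1 : opconj (@op1 I) = @op1 I.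
Proof. by apply: opext => x y; rewrite /opconj /op1 conjC_nat. Qed.

Lemma opadjb_op1 b : opadjb b (@op1 I) = @op1 I.
Proof.
apply: opext => x y; rewrite /opadjb /opconj /opadj /op1 eq_sym.
by case: b; rewrite ?conjCK ?conjC_nat.
Qed.

Lemma unitary_op1 : unitary (@op1 I).
Proof.
have adj1 : opadj (@op1 I) = @op1 I := opadjb_op1 false.
by rewrite /unitary adj1 mul1op.
Qed.

Lemma unitary_mul_permop V f : injective f -> unitary V -> unitary (opmul V (permop f)).
Proof.
move=> inj_f [VV' V'V]; rewrite /unitary opmul_permop; split.
  apply: opext => x y.
  by rewrite -VV' /opmul /opadj [RHS](reindex_inj inj_f).
apply: opext => x y; have := congr1 (fun M => M (f x) (f y)) V'V.
by rewrite /opmul /opadj /op1 /= (inj_eq inj_f) => <-.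
Qed.

(* Conjugating the permutation [f] by [V P_psi] amounts to conjugating the
   permutation [psi \o f \o psi^-1] by [V]. *)
Lemma conjugate_permop V psi psi' f rho b :
    cancel psi' psi -> (forall z, psi (f (psi' z)) = rho z) ->
  opmul (opmul (opmul V (permop psi)) (permop f)) (opadjb b (opmul V (permop psi)))
  = opmul (opmul V (permop rho)) (opadjb b V).
Proof.
move=> psi'K frho; rewrite !opmul_permop; apply: opext => x y.
rewrite /opmul [LHS](reindex_inj (can_inj psi'K)) /=.
apply: eq_bigr => z _; rewrite frho.
by case: b; rewrite /opadjb /opconj /opadj ?conjCK psi'K.
Qed.

End Operators.

Section Kronecker.
Variables I J : finType.

Lemma opkron_mul (A C : op I) (B D : op J) :
  opmul (opkron A B) (opkron C D) = opkron (opmul A C) (opmul B D).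
Proof.
apply: opext => x y; rewrite /opmul /opkron big_distrlr /= pair_bigA /=.
by apply: eq_bigr => -[z1 z2] _ /=; rewrite mulrACA.
Qed.

Lemma opadjb_kron b (A : op I) (B : op J) :
  opadjb b (opkron A B) = opkron (opadjb b A) (opadjb b B).
Proof.
by apply: opext => x y; case: b; rewrite /opadjb /opconj /opadj /opkron !rmorphM.
Qed.

Lemma opkron_op1 : opkron (@op1 I) (@op1 J) = @op1 (I * J)%type.
Proof.
apply: opext => -[x1 x2] [y1 y2].
by rewrite /opkron /op1 /= xpair_eqE -natrM mulnb.
Qed.

Lemma opkron_permop (f : I -> I) (g : J -> J) :
  opkron (permop f) (permop g) = permop (fun c => (f c.1, g c.2)).
Proof.
apply: opext => -[x1 x2] [y1 y2].
by rewrite /opkron /permop /= xpair_eqE -natrM mulnb.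
Qed.

Lemma unitary_kron (A : op I) (B : op J) :
  unitary A -> unitary B -> unitary (opkron A B).
Proof.
move=> [AA' A'A] [BB' B'B].
have adj_kron : opadj (opkron A B) = opkron (opadj A) (opadj B) := opadjb_kron false A B.
by rewrite /unitary adj_kron !opkron_mul AA' A'A BB' B'B opkron_op1.
Qed.

End Kronecker.

Section TensorPower.
Variables (N : nat) (T : finType).
Implicit Type A : 'I_N -> op T.

Definition tens A : op {ffun 'I_N -> T} :=
  fun x y => \prod_(i < N) A i (x i) (y i).

Lemma prod_eq_ffun (x y : {ffun 'I_N -> T}) :
  \prod_(i < N) ((x i == y i)%:R : algC) = (x == y)%:R.
Proof.
have [->|neq_xy] := eqVneq x y; first by rewrite big1 // => i _; rewrite eqxx.
have [i neq_xyi] : exists i, x i != y i.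
  apply/existsP; apply: contraR neq_xy => /existsPn eq_xy.
  by apply/eqP/ffunP => i; apply/eqP/negbNE.
by rewrite (bigD1 i) //= (negPf neq_xyi) mul0r.
Qed.

Lemma tens_mul A B : opmul (tens A) (tens B) = tens (fun i => opmul (A i) (B i)).
Proof.
apply: opext => x y; rewrite /opmul /tens bigA_distr_bigA /=.
by apply: eq_bigr => z _; rewrite -big_split.
Qed.

Lemma opadjb_tens b A : opadjb b (tens A) = tens (fun i => opadjb b (A i)).
Proof.
apply: opext => x y; rewrite /opadjb /opconj /opadj /tens.
by case: b; rewrite !rmorph_prod.
Qed.

Lemma tens_op1 : tens (fun=> @op1 T) = @op1 _.
Proof. by apply: opext => x y; rewrite /tens /op1 prod_eq_ffun. Qed.

Lemma tens_permop (r : 'I_N -> T -> T) :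
  tens (fun i => permop (r i))
  = permop (fun c : {ffun 'I_N -> T} => [ffun i => r i (c i)]).
Proof.
apply: opext => x y; rewrite /tens /permop -prod_eq_ffun.
by apply: eq_bigr => i _; rewrite ffunE.
Qed.

Lemma unitary_tens A : (forall i, unitary (A i)) -> unitary (tens A).
Proof.
move=> unitA.
have adj_tens : opadj (tens A) = tens (fun i => opadj (A i)) := opadjb_tens false A.
rewrite /unitary adj_tens !tens_mul.
by split; rewrite -[RHS]tens_op1; congr tens;
  apply: functional_extensionality => i; case: (unitA i).
Qed.

End TensorPower.

Section Representation.
Variables (gT : finGroupType) (tl : gT -> gT).
Hypothesis tl_morph : forall x y : gT, tl (x * y)%g = (tl x * tl y)%g.
Hypothesis tl_invol : forall x : gT, tl (tl x) = x.

Definition phase : algC := (sqrtC 2)^-1 * expi4.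

Lemma phaseE : phase = (1 + 'i) / 2.
Proof. by rewrite /phase /expi4 mulrC -mulrA -invfM -expr2 sqrtCK. Qed.

Lemma conj_phase : phase^* = (1 - 'i) / 2.
Proof.
by rewrite phaseE rmorphM rmorphD rmorph1 /= conjCi fmorphV /= conjC_nat.
Qed.

Lemma phase_normsum : phase * phase^* + phase^* * phase = 1.
Proof.
rewrite conj_phase phaseE; have := @sqrCi algC; rewrite expr2.
move: ('i : algC) => i sqr_i.
by transitivity (1 - (i * i + 1) / 2); [field | rewrite sqr_i addNr mul0r subr0].
Qed.

Lemma phase_sqrsum : phase * phase + phase^* * phase^* = 0.
Proof.
rewrite conj_phase phaseE; have := @sqrCi algC; rewrite expr2.
move: ('i : algC) => i sqr_i.
by transitivity ((i * i + 1) / 2); [field | rewrite sqr_i addNr mul0r].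
Qed.

Lemma u2E a c : u2 tl a c = phase * (a == c)%:R + phase^* * (a == tl c)%:R.
Proof.
have conj_phase' : phase^* = (sqrtC 2)^-1 * expi4^*.
  by rewrite /phase rmorphM fmorphV /= geC0_conj // sqrtC_ge0 ler0n.
rewrite /u2 /opsum (bigD1 c) //= big1 ?addr0.
  by rewrite /ketbra eqxx !andbT conj_phase' /phase; ring.
move=> g neq_gc; rewrite /ketbra [c == g]eq_sym (negPf neq_gc) !andbF.
by rewrite !mulr0 addr0 mulr0.
Qed.

Lemma eq_tl (a c : gT) : (a == tl c) = (c == tl a).
Proof. by apply/eqP/eqP => ->; rewrite tl_invol. Qed.

Lemma u2C a c : u2 tl a c = u2 tl c a.
Proof. by rewrite !u2E eq_sym eq_tl. Qed.

Lemma u2_tl a c : u2 tl a (tl c) = (u2 tl a c)^*.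
Proof.
rewrite !u2E; move: phase => p.
by rewrite rmorphD !rmorphM /= !conjC_nat conjCK tl_invol addrC.
Qed.

Lemma u2_mul_adj : opmul (u2 tl) (opadj (u2 tl)) = @op1 gT.
Proof.
apply: opext => a c; rewrite /opmul /opadj /op1.
have := u2E; move: phase phase_normsum phase_sqrsum => p normsum sqrsum u2p.
under eq_bigr do rewrite u2C u2p mulrDl -!mulrA.
rewrite big_split /= -!mulr_sumr !sum_delta u2_tl conjCK u2p.
rewrite rmorphD !rmorphM /= !conjC_nat conjCK eq_sym.
set e := ((a == c)%:R : algC); set e' := ((c == tl a)%:R : algC).
transitivity ((p * p^* + p^* * p) * e + (p * p + p^* * p^*) * e'); first by ring.
by rewrite normsum sqrsum mul1r mul0r addr0.
Qed.

Lemma unitary_u2 : unitary (u2 tl).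
Proof.
have adj_u2 : opadj (u2 tl) = opconj (u2 tl).
  by apply: opext => a c; rewrite /opadj /opconj u2C.
split; first exact: u2_mul_adj.
by rewrite adj_u2 -[X in opmul _ X]opconjK -opconj_mul -adj_u2 u2_mul_adj opconj_op1.
Qed.

Definition tilde (b : bool) : gT -> gT := if b then tl else id.

Definition Dperm (b : bool) (g0 y : gT) : gT := (g0 * tilde b y)%g.

Lemma tildeM b x y : tilde b (x * y)%g = (tilde b x * tilde b y)%g.
Proof. by case: b. Qed.

Lemma u2_local b : opmul (opmul (u2 tl) (permop (tilde b))) (opadjb b (u2 tl)) = @op1 gT.
Proof.
case: b; last by rewrite (mulop1 _ : opmul _ (permop id) = _) u2_mul_adj.
have u2_conj : opmul (u2 tl) (permop tl) = opconj (u2 tl).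
  by rewrite opmul_permop; apply: opext => a c; rewrite u2_tl.
by rewrite /= u2_conj -opconj_mul u2_mul_adj opconj_op1.
Qed.

Lemma D_permop (x : gT * bool) : D tl x = (permop (Dperm x.2 x.1), x.2).
Proof.
case: x => g [] //=.
by rewrite /D /acomp /lin /Dt /= (_ : Dtmat tl = permop tl) // opmul_permop.
Qed.

Definition divl (c : gT * gT) : gT * gT := ((c.2^-1 * c.1)%g, c.2).
Definition mull (c : gT * gT) : gT * gT := ((c.2 * c.1)%g, c.2).

Lemma divlK : cancel divl mull.
Proof. by case=> c1 c2; rewrite /divl /mull /= mulKVg. Qed.

Lemma mullK : cancel mull divl.
Proof. by case=> c1 c2; rewrite /divl /mull /= mulKg. Qed.

Lemma U1_permop : @U1 gT = permop divl.
Proof.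
apply: opext => -[a1 a2] [b1 b2].
rewrite /U1 /opsum /opkron /Dmat /ketbra /permop /divl /= xpair_eqE.
rewrite (bigD1 b2^-1%g) //= big1 ?addr0.
  by rewrite invgK eqxx !andbT -natrM mulnb.
move=> g neq_g; rewrite (_ : (b2 == g^-1)%g = (g == b2^-1)%g).
  by rewrite (negPf neq_g) andbF mulr0.
by apply/eqP/eqP => ->; rewrite invgK.
Qed.

Lemma uE : u tl = opmul (opkron (u2 tl) (@op1 gT)) (permop divl).
Proof. by rewrite /u U1_permop. Qed.

Lemma unitary_u : unitary (u tl).
Proof.
rewrite uE; apply: unitary_mul_permop (can_inj divlK) _.
exact: unitary_kron unitary_u2 (unitary_op1 _).
Qed.

Lemma divl_Dperm b g0 (c : gT * gT) :
  divl (Dperm b g0 (mull c).1, Dperm b g0 (mull c).2) = (tilde b c.1, Dperm b g0 c.2).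
Proof. by case: c => c1 c2; rewrite /divl /mull /Dperm /= tildeM (mulgA g0) mulKg. Qed.

Lemma u_conj_D b g0 :
  opmul (opmul (u tl) (opkron (permop (Dperm b g0)) (permop (Dperm b g0))))
    (opadjb b (u tl))
  = opkron (@op1 gT) (permop (Dperm b g0)).
Proof.
rewrite uE opkron_permop (conjugate_permop _ _ mullK (divl_Dperm b g0)).
by rewrite -opkron_permop opadjb_kron !opkron_mul u2_local opadjb_op1 mul1op mulop1.
Qed.

Section Copies.
Variable n : nat.

Definition divl_last (c : {ffun 'I_n.+1 -> gT}) : {ffun 'I_n.+1 -> gT} :=
  [ffun i => if i == ord_max then c ord_max else ((c ord_max)^-1 * c i)%g].
Definition mull_last (c : {ffun 'I_n.+1 -> gT}) : {ffun 'I_n.+1 -> gT} :=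
  [ffun i => if i == ord_max then c ord_max else (c ord_max * c i)%g].

Lemma divl_lastK : cancel divl_last mull_last.
Proof.
move=> c; apply/ffunP => i.
by case: (eqVneq i ord_max) => [-> | neq_i]; rewrite !ffunE ?eqxx ?(negPf neq_i) ?mulKVg.
Qed.

Lemma mull_lastK : cancel mull_last divl_last.
Proof.
move=> c; apply/ffunP => i.
by case: (eqVneq i ord_max) => [-> | neq_i]; rewrite !ffunE ?eqxx ?(negPf neq_i) ?mulKg.
Qed.

Definition uN : op {ffun 'I_n.+1 -> gT} :=
  opmul (tens (fun i : 'I_n.+1 => if i == ord_max then @op1 gT else u2 tl))
    (permop divl_last).

Lemma unitary_uN : unitary uN.
Proof.
apply: unitary_mul_permop (can_inj divl_lastK) _; apply: unitary_tens => i.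
by case: (i == ord_max); [exact: unitary_op1 | exact: unitary_u2].
Qed.

Lemma uN_conj_D b g0 :
  opmul (opmul uN (tens (fun=> permop (Dperm b g0)))) (opadjb b uN)
  = tens (fun i : 'I_n.+1 => if i == ord_max then permop (Dperm b g0) else @op1 gT).
Proof.
pose r (i : 'I_n.+1) := if i == ord_max then Dperm b g0 else tilde b.
have divl_last_Dperm c : divl_last [ffun i => Dperm b g0 (mull_last c i)]
                  = [ffun i => r i (c i)].
  apply/ffunP => i; rewrite /divl_last /mull_last /r.
  case: (eqVneq i ord_max) => [-> | neq_i]; rewrite !ffunE ?eqxx ?(negPf neq_i) //.
  by rewrite /Dperm tildeM (mulgA g0) mulKg.
rewrite (tens_permop (fun=> Dperm b g0)) /uN.
rewrite (conjugate_permop _ _ mull_lastK divl_last_Dperm).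
rewrite -(tens_permop r) opadjb_tens !tens_mul; congr tens.
apply: functional_extensionality => i; rewrite /r.
by case: (i == ord_max); rewrite ?mul1op ?opadjb_op1 ?mulop1 ?u2_local.
Qed.

End Copies.
End Representation.

Lemma id_tens_last_tens (gT : finGroupType) n (X : op gT) b :
  id_tens_last n (X, b)
  = (tens (fun i : 'I_n.+1 => if i == ord_max then X else @op1 gT), b).
Proof.
congr (_, _); apply: opext => x y; rewrite /tens big_ord_recr /= eqxx.
congr (_ * _); apply: eq_bigr => i _.
by rewrite (_ : widen_ord _ i == ord_max = false) // -val_eqE /= ltn_eqF.
Qed.

Theorem mainTheorem7 (gT : finGroupType) (tl : gT -> gT)
  (tl_morph : forall x y : gT, tl (x * y)%g = (tl x * tl y)%g)
  (tl_invol : forall x : gT, tl (tl x) = x) :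
  unitary (u tl)
  /\ (forall x : gT * bool,
        acomp (acomp (lin (u tl)) (akron (D tl x) (D tl x))) (lin (opadj (u tl)))
        = akron (lin (@op1 gT)) (D tl x))
  /\ (forall n : nat, exists W : op {ffun 'I_n.+1 -> gT},
        unitary W /\
        forall x : gT * bool,
          acomp (acomp (lin W) (tpow n.+1 (D tl x))) (lin (opadj W))
          = id_tens_last n (D tl x)).
Proof.
split; first exact: unitary_u.
split.
  move=> [g0 b]; rewrite D_permop /acomp /akron /lin /= orbb addbF.
  by congr (_, _); exact: (u_conj_D tl_morph tl_invol b g0).
move=> n; exists (uN tl (n := n)); split; first exact: unitary_uN.
move=> [g0 b]; rewrite D_permop id_tens_last_tens /acomp /lin /tpow /= addbF.
by congr (_, _); exact: (uN_conj_D tl_morph tl_invol).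
Qed.
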